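(* In the setting described in the context, let $C_\phi$ be a Lipschitz constant of $\phi$. For every $m$ and every $x,x'$ lying in the same green cylinder, $$e^{-C_\phi/2}\le \frac{H_m(x)}{H_m(x')}\le e^{C_\phi/2}.$$
   Context: Setting: $A$ ($K\times K$) and $D$ ($N\times N$) are irreducible $\{0,1\}$-matrices; $M_0$ is a $(K+N)\times(K+N)$ $\{0,1\}$-matrix with diagonal blocks $A$, $D$ and some power with all entries positive; the alphabet is $\{\alpha_1,\dots,\alpha_K,\delta_1,\dots,\delta_N\}$; $\Sigma_0$ is the one-sided SFT for $M_0$ with shift $\sigma$ and metric $d(\omega,\omega')=2^{-\min\{k:\omega_k\ne\omega'_k\}}$; $\Sigma_A,\Sigma_D$ are the points with only $\alpha$-digits, resp. only $\delta$-digits; $\phi:\Sigma_0\to\mathbb R$ is Lipschitz with $|\phi(x)-\phi(y)|\le C_\phi d(x,y)$ and has the same pressure $P$ on $\Sigma_A$ and $\Sigma_D$. $\alpha_j\delta_l$ denotes any allowed word $\alpha$-digit then $\delta$-digit, $\delta_i\alpha_k$ any allowed word $\delta$-digit then $\alpha$-digit; $\delta^n,\alpha^n$ denote words of $n$ $\delta$-, resp. $\alpha$-digits. $A'\le A$, $D'\le D$ entrywise are $\{0,1\}$-matrices with $A'\ne A$, $D'\ne D$, rows of $A'$ indexed by $\alpha$-digits that can follow a $\delta$-digit nonzero, rows of $D'$ indexed by $\delta$-digits that can follow an $\alpha$-digit nonzero; $(n_m),(n'_m)$ increasing integer sequences tending to $\infty$. $\Sigma_m\subset\Sigma_0$ is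 obtained by additionally forbidding: $\alpha_j\delta_l\delta^n\delta_i\alpha_k$ with $n<n'_m-2$, or with $n\ge n'_m-2$ and $\delta_l$ followed by the first $n'_m-2$ letters of $\delta^n$ not $D'$-eligible; $\delta_i\alpha_k\alpha^n\alpha_j\delta_l$ with $n<n_m-2$, or with $n\ge n_m-2$ and $\alpha_k$ followed by the first $n_m-2$ letters of $\alpha^n$ not $A'$-eligible (eligible = all consecutive transitions allowed by the matrix). $P_m$ is the pressure of $\phi$ on $\Sigma_m$. Induced scheme: green cylinders are the 2-cylinders $[\alpha_j\delta_l]$ and $[\delta_i\alpha_k]$, and $G$ is their union. For $x\in[\delta_i\alpha_k]$ its $g_m$-preimages are the points $y=\alpha_j\delta_l w x$ (with $w$ a $\delta$-word) such that $\alpha_j\delta_l w\delta_i\alpha_k$ is allowed in $\Sigma_m$, with return time $r_m(y)=|w|+2$; symmetrically for $x\in[\alpha_j\delta_l]$. The induced transfer operator is $\mathcal L_{G,m}f(x)=\sum_{y:\,g_m(y)=x}e^{S_{r_m(y)}\phi(y)-r_m(y)P_m}f(y)$, with $S_n\phi=\sum_{i<n}\phi\circ\sigma^i$. It has spectral radius 1; $\nu_m$ is the probability with $\int\mathcal L_{G,m}f\,d\nu_m=\int f\,d\nu_m$, and $H_m=\lim_{n}\frac1n\sum_{k=0}^{n-1}\mathcal L_{G,m}^k(\mathbf 1_G)$ (uniform limit) is the positive eigenfunction $\mathcal L_{G,m}H_m=H_m$ with $\int H_m\,d\nu_m=1$. *)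

From HB Require Import structures.
From mathcomp Require Import all_boot all_order all_algebra.
From mathcomp Require Import all_classical all_reals all_analysis.

Set Implicit Arguments.
Unset Strict Implicit.
Unset Printing Implicit Defensive.

Import Order.TTheory GRing.Theory Num.Theory.
Import numFieldNormedType.Exports.
Local Open Scope classical_set_scope.
Local Open Scope ring_scope.

Section Setting.
Variable R : realType.
Variables K N : nat.

(* alphabet {alpha_1..alpha_K, delta_1..delta_N} encoded as 'I_(K+N):
   alpha_j = lshift N j, delta_l = rshift K l *)
Local Notation alph := 'I_(K + N).
Local Notation pt := (nat -> alph).

Definition isA (a : alph) : bool := (a < K)%N.
Definition isD (a : alph) : bool := (K <= a)%N.
Definition alpha (j : 'I_K) : alph := lshift N j.
Definition delta (l : 'I_N) : alph := rshift K l.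

Definition zero_one n (M : 'M[int]_n) : Prop :=
  forall i j, M i j = 0 \/ M i j = 1.
Definition irreducible_mx n (M : 'M[int]_n) : Prop :=
  forall i j, exists k, (0 < k)%N /\ 0 < (M ^+ k) i j.
Definition primitive_mx n (M : 'M[int]_n) : Prop :=
  exists k, forall i j, 0 < (M ^+ k) i j.

Definition Sigma0 (M0 : 'M[int]_(K + N)) : set pt :=
  [set x | forall k, M0 (x k) (x k.+1) = 1].
Definition SigmaA (M0 : 'M[int]_(K + N)) : set pt :=
  [set x | Sigma0 M0 x /\ forall k, isA (x k)].
Definition SigmaD (M0 : 'M[int]_(K + N)) : set pt :=
  [set x | Sigma0 M0 x /\ forall k, isD (x k)].

Definition shiftn (i : nat) (x : pt) : pt := fun k => x (i + k)%N.

Definition dist (x y : pt) : R :=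
  match pselect (exists k, x k != y k) with
  | left h => 2 ^- (@ex_minn (fun k => x k != y k) h)
  | right _ => 0
  end.

Definition lipschitz_const (X : set pt) (phi : pt -> R) (C : R) : Prop :=
  forall x y, X x -> X y -> `|phi x - phi y| <= C * dist x y.

Definition Sn (phi : pt -> R) (n : nat) (x : pt) : R :=
  \sum_(i < n) phi (shiftn i x).

Definition cyl (w : seq alph) : set pt :=
  [set x | forall i, (i < size w)%N -> x i = nth (x 0%N) w i].

Definition Zn (X : set pt) (phi : pt -> R) (n : nat) : R :=
  \sum_(w : n.-tuple alph | `[< X `&` cyl w !=set0 >])
     expR (sup [set Sn phi n x | x in X `&` cyl w]).
Definition pressure (X : set pt) (phi : pt -> R) : R :=
  limn (fun n : nat => ln (Zn X phi n) / n%:R).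

Definition occurs_at (x : pt) (p : nat) (s : seq alph) : Prop :=
  forall i, (i < size s)%N -> x (p + i)%N = nth (x 0%N) s i.
Definition allowed (X : set pt) (s : seq alph) : Prop :=
  exists x p, X x /\ occurs_at x p s.

Definition Atrans (A' : 'M[int]_K) (a b : alph) : bool :=
  match fintype.split a, fintype.split b with
  | inl j, inl j' => A' j j' == 1
  | _, _ => false
  end.
Definition Dtrans (D' : 'M[int]_N) (a b : alph) : bool :=
  match fintype.split a, fintype.split b with
  | inr l, inr l' => D' l l' == 1
  | _, _ => false
  end.

(* A word alpha_j delta_l delta^n delta_i alpha_k occurring at position p
   means: x p is alpha, x (p+1) .. x (p+n+2) are delta, x (p+n+3) is alpha.
   It is allowed only if n >= n'_m - 2 and delta_l followed by the first
   n'_m - 2 letters of delta^n (positions p+1 .. p+n'_m-1) is D'-eligible.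
   Symmetrically for alpha-runs. *)
Definition SigmaM (M0 : 'M[int]_(K + N)) (A' : 'M[int]_K) (D' : 'M[int]_N)
    (nm nm' : nat -> nat) (m : nat) : set pt :=
  [set x | Sigma0 M0 x /\
    (forall p n, isA (x p) ->
       (forall i, (i < n.+2)%N -> isD (x (p + i.+1)%N)) ->
       isA (x (p + n.+3)%N) ->
       (nm' m - 2 <= n)%N /\
       forall i, (i < nm' m - 2)%N -> Dtrans D' (x (p + i.+1)%N) (x (p + i.+2)%N)) /\
    (forall p n, isD (x p) ->
       (forall i, (i < n.+2)%N -> isA (x (p + i.+1)%N)) ->
       isD (x (p + n.+3)%N) ->
       (nm m - 2 <= n)%N /\
       forall i, (i < nm m - 2)%N -> Atrans A' (x (p + i.+1)%N) (x (p + i.+2)%N))].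

Definition greenAD (x : pt) : bool := isA (x 0%N) && isD (x 1%N).
Definition greenDA (x : pt) : bool := isD (x 0%N) && isA (x 1%N).
Definition Green (M0 : 'M[int]_(K + N)) : set pt :=
  [set x | Sigma0 M0 x /\ (greenAD x || greenDA x)].

Definition prepend (s : seq alph) (x : pt) : pt :=
  fun k => if (k < size s)%N then nth (x 0%N) s k else x (k - size s)%N.

(* induced transfer operator L_{G,m}, acting on nonnegative
   extended-real valued functions (the series over the length |w| = n
   of the delta- (resp. alpha-) word w is a series of nonnegative terms) *)
Definition LG (M0 : 'M[int]_(K + N)) (A' : 'M[int]_K) (D' : 'M[int]_N)
    (nm nm' : nat -> nat) (m : nat) (phi : pt -> R)
    (f : pt -> \bar R) : pt -> \bar R :=
  fun x =>
  let Sm := SigmaM M0 A' D' nm nm' m in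
  let Pm := pressure Sm phi in
  if `[< Sigma0 M0 x >] && greenDA x then
    (\sum_(0 <= n <oo)
       \sum_(j : 'I_K) \sum_(l : 'I_N) \sum_(w : n.-tuple 'I_N)
         (if `[< allowed Sm ([:: alpha j; delta l] ++ map delta w ++ [:: x 0%N; x 1%N]) >]
          then (expR (Sn phi n.+2 (prepend (alpha j :: delta l :: map delta w) x)
                      - n.+2%:R * Pm))%:E
               * f (prepend (alpha j :: delta l :: map delta w) x)
          else 0))%E
  else if `[< Sigma0 M0 x >] && greenAD x then
    (\sum_(0 <= n <oo)
       \sum_(i : 'I_N) \sum_(k : 'I_K) \sum_(w : n.-tuple 'I_K)
         (if `[< allowed Sm ([:: delta i; alpha k] ++ map alpha w ++ [:: x 0%N; x 1%N]) >]
          then (expR (Sn phi n.+2 (prepend (delta i :: alpha k :: map alpha w) x)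
                      - n.+2%:R * Pm))%:E
               * f (prepend (delta i :: alpha k :: map alpha w) x)
          else 0))%E
  else 0%E.

Definition indicG (M0 : 'M[int]_(K + N)) : pt -> \bar R :=
  fun x => if `[< Green M0 x >] then 1%E else 0%E.

Definition cesaro (M0 : 'M[int]_(K + N)) (A' : 'M[int]_K) (D' : 'M[int]_N)
    (nm nm' : nat -> nat) (m : nat) (phi : pt -> R) (n : nat) (x : pt) : \bar R :=
  ((n.+1%:R)^-1%:E *
     \sum_(k < n.+1) iter k (LG M0 A' D' nm nm' m phi) (indicG M0) x)%E.

Definition is_H (M0 : 'M[int]_(K + N)) (A' : 'M[int]_K) (D' : 'M[int]_N)
    (nm nm' : nat -> nat) (m : nat) (phi : pt -> R) (H : pt -> R) : Prop :=
  forall eps : R, 0 < eps -> exists n0 : nat, forall n x, (n0 <= n)%N ->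
    Green M0 x ->
    ((H x - eps)%:E <= cesaro M0 A' D' nm nm' m phi n x <= (H x + eps)%:E)%E.

End Setting.

From Pilot Require Import Defs.
From HB Require Import structures.
From mathcomp Require Import all_boot all_order all_algebra.
From mathcomp Require Import all_classical all_reals all_analysis.
From mathcomp Require Import zify ring lra.
Set Implicit Arguments.
Unset Strict Implicit.
Unset Printing Implicit Defensive.

Import Order.TTheory GRing.Theory Num.Theory.
Import numFieldNormedType.Exports.
Local Open Scope classical_set_scope.
Local Open Scope ring_scope.

(** For [p >= 2], say [f] has bounded distortion if [f y <= exp (2 C 2^-p) f y']
    whenever [y] and [y'] share their first [p] letters.  The indicator of [G]
    has bounded distortion and [L_{G,m}] preserves it: the preimages [s y] and
    [s y'] share [|s| + p] letters, so their Birkhoff sums along [s] differ by at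
    most [C 2^-p], and [exp (C 2^-p) exp (2 C 2^-(|s|+p)) <= exp (2 C 2^-p)]
    because [|s| >= 1].  The Cesaro averages and their uniform limit [H_m]
    inherit the bound, which for [p = 2] (a common green cylinder) is [exp (C/2)]. *)

Section Distortion.
Variables (R : realType) (K N : nat).
Local Notation alph := 'I_(K + N).
Local Notation pt := (nat -> alph).

Definition agree (p : nat) (x y : pt) : Prop := forall i, (i < p)%N -> x i = y i.

Lemma dist_le_agree p (x y : pt) : agree p x y -> dist R x y <= 2^-1 ^+ p.
Proof.
move=> xy; rewrite /dist; case: pselect => [ex|_]; last first.
  by rewrite exprn_ge0 // invr_ge0.
case: ex_minnP => k xyk _.
have pk : (p <= k)%N.
  by rewrite leqNgt; apply/negP => ltkp; rewrite xy // eqxx in xyk.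
rewrite -exprVn; apply: ler_wiXn2l => //.
by rewrite invf_le1 // ler1n.
Qed.

Lemma dist_gt0 (x y : pt) k : x k != y k -> 0 < dist R x y.
Proof.
move=> xyk; rewrite /dist; case: pselect => [ex|[]]; last by exists k.
by rewrite invr_gt0 exprn_gt0.
Qed.

Lemma lipschitz_const_ge0 (X : set pt) (phi : pt -> R) C (x y : pt) k :
  lipschitz_const X phi C -> X x -> X y -> x k != y k -> 0 <= C.
Proof.
move=> Lip Xx Xy xyk; rewrite -(pmulr_lge0 _ (dist_gt0 xyk)).
exact: le_trans (normr_ge0 _) (Lip _ _ Xx Xy).
Qed.

Lemma sum_geometric_tail_le m p :
  \sum_(i < m) (2^-1 : R) ^+ (m - i + p) <= 2^-1 ^+ p.
Proof.
elim: m p => [|m IHm] p; first by rewrite big_ord0 exprn_ge0 // invr_ge0.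
rewrite big_ord_recr subSnn add1n /=.
have -> : \sum_(i < m) (2^-1 : R) ^+ (m.+1 - widen_ord (leqnSn m) i + p)
        = \sum_(i < m) 2^-1 ^+ (m - i + p.+1).
  by apply: eq_bigr => i _ /=; congr (_ ^+ _); have := ltn_ord i; lia.
by apply: le_trans (lerD (IHm p.+1) (lexx _)) _; rewrite exprS; lra.
Qed.

Variable M0 : 'M[int]_(K + N).

Lemma Sigma0_shiftn i x : Sigma0 M0 x -> Sigma0 M0 (shiftn i x).
Proof. by move=> Sx k; rewrite /shiftn addnS; apply: Sx. Qed.

Lemma agree_prepend s p y y' :
  agree p y y' -> agree (size s + p) (prepend s y) (prepend s y').
Proof.
move=> yy' i ltip; rewrite /prepend; case: ifP => [ltis|/negbT].
  exact: set_nth_default.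
by rewrite -leqNgt => leis; apply: yy'; lia.
Qed.

(* The transition from the last letter of [s] into [y 0] is read off the
   allowed word [s ++ [:: y 0; y 1]]. *)
Lemma Sigma0_prepend (X : set pt) s y :
  X `<=` Sigma0 M0 -> Sigma0 M0 y -> allowed X (s ++ [:: y 0%N; y 1%N]) ->
  Sigma0 M0 (prepend s y).
Proof.
move=> XS Sy [z [q [Xz occ]]].
have prependE i : (i <= size s)%N ->
    prepend s y i = nth (z 0%N) (s ++ [:: y 0%N; y 1%N]) i.
  move=> leis; rewrite /prepend nth_cat; case: ifP => [ltis|/negbT].
    exact: set_nth_default.
  rewrite -leqNgt => lesi; have -> : i = size s by lia.
  by rewrite subnn.
have size_word : size (s ++ [:: y 0%N; y 1%N]) = (size s).+2.
  by rewrite size_cat addn2.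
move=> k; case: (ltnP k (size s)) => [ltks|leks].
  rewrite !prependE ?(ltnW ltks) // -!occ ?size_word; try lia.
  by rewrite addnS; apply: (XS _ Xz).
rewrite /prepend ltnNge leks /= ltnNge (leqW leks) /= subSn //; exact: Sy.
Qed.

Variables (phi : pt -> R) (C : R).
Hypotheses (C_ge0 : 0 <= C) (phi_lip : lipschitz_const (Sigma0 M0) phi C).

Lemma Sn_prepend_diff_le s p y y' :
  Sigma0 M0 (prepend s y) -> Sigma0 M0 (prepend s y') -> agree p y y' ->
  Sn phi (size s) (prepend s y) - Sn phi (size s) (prepend s y') <= C * 2^-1 ^+ p.
Proof.
move=> Sy Sy' yy'; rewrite /Sn -sumrB.
apply: le_trans (_ : \sum_(i < size s) C * 2^-1 ^+ (size s - i + p) <= _).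
  apply: ler_sum => i _; apply: le_trans (ler_norm _) _.
  apply: le_trans (phi_lip (Sigma0_shiftn i Sy) (Sigma0_shiftn i Sy')) _.
  apply: ler_wpM2l => //; apply: dist_le_agree => j ltj.
  by rewrite /shiftn (agree_prepend yy') //; have := ltn_ord i; lia.
by rewrite -mulr_sumr; apply: ler_wpM2l => //; apply: sum_geometric_tail_le.
Qed.

Definition distortion (p : nat) : R := expR (C * 2 * 2^-1 ^+ p).

Lemma distortion_ge1 p : 1 <= distortion p.
Proof.
apply: le_trans (expR_ge1Dx _).
by rewrite lerDl !mulr_ge0 // exprn_ge0.
Qed.

Lemma distortion_prepend n p : (1 <= n)%N ->
  expR (C * 2^-1 ^+ p) * distortion (n + p) <= distortion p.
Proof.
move=> n_ge1; rewrite /distortion -expRD ler_expR.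
have : 2 * (2^-1 : R) ^+ (n + p) <= 2^-1 ^+ p.
  case: n n_ge1 => // n _.
  rewrite exprD exprS !mulrA divff // mul1r ler_piMl ?exprn_ge0 ?invr_ge0 //.
  by rewrite exprn_ile1 ?invr_ge0 // invf_le1 // ler1n.
move/(ler_wpM2l C_ge0); lra.
Qed.

Definition bounded_distortion (f : pt -> \bar R) : Prop :=
  (forall y, 0 <= f y)%E /\
  forall p y y', (2 <= p)%N -> Sigma0 M0 y -> Sigma0 M0 y' -> agree p y y' ->
    (f y <= (distortion p)%:E * f y')%E.

Lemma induced_term_le (X : set pt) f s y y' p (c : R) :
  X `<=` Sigma0 M0 -> bounded_distortion f ->
  (2 <= p)%N -> (1 <= size s)%N -> Sigma0 M0 y -> Sigma0 M0 y' -> agree p y y' ->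
  allowed X (s ++ [:: y 0%N; y 1%N]) ->
  ((expR (Sn phi (size s) (prepend s y) - c))%:E * f (prepend s y)
   <= (distortion p)%:E *
      ((expR (Sn phi (size s) (prepend s y') - c))%:E * f (prepend s y')))%E.
Proof.
move=> XS [f_ge0 f_dist] p_ge2 s_ge1 Sy Sy' yy' al.
have [y0 y1] : y 0%N = y' 0%N /\ y 1%N = y' 1%N by split; apply: yy'; lia.
have Ssy := Sigma0_prepend XS Sy al.
have Ssy' : Sigma0 M0 (prepend s y') by apply: Sigma0_prepend XS Sy' _; rewrite -y0 -y1.
have syy' := agree_prepend (s := s) yy'.
have f_le := f_dist _ _ _ (leq_trans p_ge2 (leq_addl _ _)) Ssy Ssy' syy'.
set a := expR (Sn phi (size s) (prepend s y) - c).
set a' := expR (Sn phi (size s) (prepend s y') - c).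
have a_le : a <= expR (C * 2^-1 ^+ p) * a'.
  by rewrite /a /a' -expRD ler_expR; have := Sn_prepend_diff_le Ssy Ssy' yy'; lra.
apply: (@le_trans _ _ ((expR (C * 2^-1 ^+ p) * a')%:E *
                        ((distortion (size s + p))%:E * f (prepend s y')))%E).
  by apply: lee_pmul; rewrite ?lee_fin ?expR_ge0.
rewrite EFinM -muleA (muleCA a'%:E) muleA -EFinM.
apply: lee_wpmul2r; first by apply: mule_ge0; rewrite ?lee_fin ?expR_ge0.
by rewrite lee_fin distortion_prepend.
Qed.

Lemma weighted_term_ge0 (b : bool) (r : R) (z : \bar R) :
  (0 <= z)%E -> (0 <= if b then (expR r)%:E * z else 0)%E.
Proof. by case: b => // z_ge0; rewrite mule_ge0 // lee_fin expR_ge0. Qed.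

Lemma induced_series_le (I J : finType) (W : nat -> finType)
    (word : forall n, I -> J -> W n -> seq alph) (X : set pt) (c : R) f p y y' :
  (forall n i j w, size (word n i j w) = n.+2) ->
  X `<=` Sigma0 M0 -> bounded_distortion f ->
  (2 <= p)%N -> Sigma0 M0 y -> Sigma0 M0 y' -> agree p y y' ->
  let series z := (\sum_(0 <= n <oo) \sum_(i : I) \sum_(j : J) \sum_(w : W n)
      (if `[< allowed X (word n i j w ++ [:: z 0%N; z 1%N]) >]
       then (expR (Sn phi n.+2 (prepend (word n i j w) z) - n.+2%:R * c))%:E
            * f (prepend (word n i j w) z)
       else 0))%E in
  is_true (series y <= (distortion p)%:E * series y')%E.
Proof.
move=> size_word XS fd p_ge2 Sy Sy' yy' series; have [f_ge0 _] := fd.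
have [y0 y1] : y 0%N = y' 0%N /\ y 1%N = y' 1%N by split; apply: yy'; lia.
rewrite /series -y0 -y1 -nneseriesZl => [|n _]; last first.
  by do 3 apply: sume_ge0 => ? _; exact: weighted_term_ge0.
apply: lee_nneseries => [n _ _|n _].
  by do 3 apply: sume_ge0 => ? _; exact: weighted_term_ge0.
rewrite ge0_sume_distrr => [|i _]; last first.
  by do 2 apply: sume_ge0 => ? _; exact: weighted_term_ge0.
apply: lee_sum => i _; rewrite ge0_sume_distrr => [|j _]; last first.
  by apply: sume_ge0 => ? _; exact: weighted_term_ge0.
apply: lee_sum => j _; rewrite ge0_sume_distrr => [|w _]; last exact: weighted_term_ge0.
apply: lee_sum => w _; case: asboolP => al; last by rewrite mule0.
rewrite -(size_word n i j w).
by apply: (induced_term_le _ XS fd p_ge2 _ Sy Sy' yy' al); rewrite size_word.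
Qed.

Variables (A' : 'M[int]_K) (D' : 'M[int]_N) (nm nm' : nat -> nat) (m : nat).
Local Notation L := (LG M0 A' D' nm nm' m phi).

Lemma LG_ge0 f : (forall y, 0 <= f y)%E -> forall y, (0 <= L f y)%E.
Proof.
move=> f_ge0 y; rewrite /LG; case: ifP => _; [|case: ifP => _ //];
  by apply: nneseries_ge0 => n _ _; do 3 apply: sume_ge0 => ? _; exact: weighted_term_ge0.
Qed.

Lemma bounded_distortion_LG f : bounded_distortion f -> bounded_distortion (L f).
Proof.
move=> fd; have [f_ge0 _] := fd; split; first exact: LG_ge0.
move=> p y y' p_ge2 Sy Sy' yy'.
have [y0 y1] : y 0%N = y' 0%N /\ y 1%N = y' 1%N by split; apply: yy'; lia.
have XS : SigmaM M0 A' D' nm nm' m `<=` Sigma0 M0 by move=> z [].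
rewrite /LG (asboolT Sy) (asboolT Sy') /=.
have -> : greenDA y' = greenDA y by rewrite /greenDA y0 y1.
have -> : greenAD y' = greenAD y by rewrite /greenAD y0 y1.
case: (greenDA y) => /=.
  apply: (induced_series_le (word := fun n j l (w : n.-tuple 'I_N) =>
            alpha N j :: delta K l :: map (@delta K N) w)) => //.
  by move=> n j l w; rewrite /= size_map size_tuple.
case: (greenAD y) => /=; last by rewrite mule0.
apply: (induced_series_le (word := fun n i k (w : n.-tuple 'I_K) =>
          delta K i :: alpha N k :: map (@alpha K N) w)) => //.
by move=> n i k w; rewrite /= size_map size_tuple.
Qed.

Lemma bounded_distortion_indicG : bounded_distortion (indicG R M0).
Proof.
split=> [y|p y y' p_ge2 Sy Sy' yy']; first by rewrite /indicG; case: asboolP.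
have [y0 y1] : y 0%N = y' 0%N /\ y 1%N = y' 1%N by split; apply: yy'; lia.
have Gyy' : Green M0 y <-> Green M0 y'.
  by rewrite /Green /greenAD /greenDA /= y0 y1; split=> -[_ green]; split.
rewrite /indicG; case: asboolP => [/Gyy' Gy'|_]; last first.
  by case: asboolP; rewrite ?mule0 // mule1 lee_fin expR_ge0.
by rewrite asboolT // mule1 lee_fin distortion_ge1.
Qed.

Lemma bounded_distortion_iter k : bounded_distortion (iter k L (indicG R M0)).
Proof.
elim: k => [|k IHk] /=; first exact: bounded_distortion_indicG.
exact: bounded_distortion_LG.
Qed.

Lemma cesaro_le_distortion n x x' :
  Sigma0 M0 x -> Sigma0 M0 x' -> agree 2 x x' ->
  (Defs.cesaro M0 A' D' nm nm' m phi n x <=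
   (distortion 2)%:E * Defs.cesaro M0 A' D' nm nm' m phi n x')%E.
Proof.
move=> Sx Sx' xx'; rewrite /Defs.cesaro muleCA.
apply: lee_wpmul2l; first by rewrite lee_fin invr_ge0.
rewrite ge0_sume_distrr => [|k _]; last by have [] := bounded_distortion_iter k.
apply: lee_sum => k _; have [_ iter_dist] := bounded_distortion_iter k.
exact: iter_dist.
Qed.

Lemma is_H_le_scaled H (B : R) x x' :
  0 <= B -> is_H M0 A' D' nm nm' m phi H -> Green M0 x -> Green M0 x' ->
  (forall n, Defs.cesaro M0 A' D' nm nm' m phi n x <=
             B%:E * Defs.cesaro M0 A' D' nm nm' m phi n x')%E ->
  H x <= B * H x'.
Proof.
move=> B_ge0 HH Gx Gx' ces_le; apply/ler_addgt0Pr => e e_gt0.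
have e'_gt0 : 0 < e / (B + 1) by rewrite divr_gt0 // ltr_wpDl.
have [n0 approx] := HH _ e'_gt0.
have /andP[Hx_le _] := approx n0 x (leqnn _) Gx.
have /andP[_ Hx'_ge] := approx n0 x' (leqnn _) Gx'.
have B_ge0' : (0 <= B%:E)%E by rewrite lee_fin.
have := le_trans Hx_le (le_trans (ces_le n0) (lee_wpmul2l B_ge0' Hx'_ge)).
rewrite -EFinM lee_fin; set e' := e / (B + 1).
have : (B + 1) * e' = e by rewrite /e' mulrC divfK // lt0r_neq0 // ltr_wpDl.
lra.
Qed.

End Distortion.

Theorem lemma2 (R : realType) (K N : nat)
    (A : 'M[int]_K) (D : 'M[int]_N) (M0 : 'M[int]_(K + N))
    (A' : 'M[int]_K) (D' : 'M[int]_N) (nm nm' : nat -> nat)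
    (phi : (nat -> 'I_(K + N)) -> R) (Cphi : R) :
  (* A, D irreducible {0,1}-matrices; M0 a primitive {0,1}-matrix
     with diagonal blocks A and D *)
  zero_one A -> zero_one D -> irreducible_mx A -> irreducible_mx D ->
  zero_one M0 -> ulsubmx M0 = A -> drsubmx M0 = D -> primitive_mx M0 ->
  (* phi Lipschitz on Sigma_0 with constant Cphi, same pressure on Sigma_A, Sigma_D *)
  lipschitz_const (Sigma0 M0) phi Cphi ->
  pressure (SigmaA M0) phi = pressure (SigmaD M0) phi ->
  (* A' <= A, D' <= D, {0,1}, A' <> A, D' <> D, row conditions *)
  zero_one A' -> zero_one D' ->
  (forall i j, A' i j <= A i j) -> (forall i j, D' i j <= D i j) ->
  A' <> A -> D' <> D ->
  (forall k : 'I_K, (exists i : 'I_N, M0 (delta K i) (alpha N k) = 1) ->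
     exists k' : 'I_K, A' k k' != 0) ->
  (forall l : 'I_N, (exists j : 'I_K, M0 (alpha N j) (delta K l) = 1) ->
     exists l' : 'I_N, D' l l' != 0) ->
  (* (n_m), (n'_m) increasing, tending to infinity *)
  {homo nm : a b / (a < b)%N} -> {homo nm' : a b / (a < b)%N} ->
  forall (m : nat) (H : (nat -> 'I_(K + N)) -> R),
  (* H = H_m is the uniform limit of the Cesaro averages of L_{G,m}^k 1_G *)
  is_H M0 A' D' nm nm' m phi H ->
  forall x x' : nat -> 'I_(K + N),
    Green M0 x -> Green M0 x' -> x 0%N = x' 0%N -> x 1%N = x' 1%N ->
    expR (- Cphi / 2) * H x' <= H x /\ H x <= expR (Cphi / 2) * H x'.
Proof.
move=> _ _ _ _ _ _ _ _ phi_lip _ _ _ _ _ _ _ _ _ _ _ m H HH x x' Gx Gx' x0 x1.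
have C_ge0 : 0 <= Cphi.
  have [Sx green_x] := Gx.
  apply: (lipschitz_const_ge0 (k := 0%N) phi_lip Sx (Sigma0_shiftn 1 Sx)).
  apply/eqP; rewrite /shiftn addn0 => x01.
  by move: green_x; rewrite /greenAD /greenDA /isA /isD x01 ltnNge andNb andbN.
have distortion2E : distortion Cphi 2 = expR (Cphi / 2).
  by congr expR; rewrite expr2; field.
have H_le y y' : Green M0 y -> Green M0 y' -> y 0%N = y' 0%N -> y 1%N = y' 1%N ->
    H y <= expR (Cphi / 2) * H y'.
  move=> Gy Gy' y0 y1; have [[Sy _] [Sy' _]] := (Gy, Gy').
  rewrite -distortion2E; apply: (is_H_le_scaled (expR_ge0 _) HH Gy Gy') => n.
  by apply: cesaro_le_distortion => //; case=> [|[|]].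
split; last exact: H_le.
have := H_le x' x Gx' Gx (esym x0) (esym x1).
move/(ler_wpM2l (expR_ge0 (- Cphi / 2))).
by rewrite mulrA -expRD mulNr addNr expR0 mul1r.
Qed.
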